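(* Let $k$ be a field of characteristic $0$, let $A$ be a $k$-algebra, let $\mathfrak{p}$ be a prime ideal of $A$, and let $\alpha\colon A\to K[t]/(t^{m+1})$ be an $m$-jet of $A$ centered at $\mathfrak{p}$ and valued in a field extension $K/k$. Suppose that for some field extension $E/K$ there is a $k$-algebra map $A\to E[t]/(t^{m+2})$ whose reduction modulo $t^{m+1}$ equals $\alpha$ composed with $K[t]/(t^{m+1})\to E[t]/(t^{m+1})$. Then there is a $k$-algebra map $\beta\colon A\to K[t]/(t^{m+2})$ whose reduction modulo $t^{m+1}$ equals $\alpha$.
   Context: An $m$-jet of a $k$-algebra $A$ valued in $K$ is a $k$-algebra homomorphism $A\to K[t]/(t^{m+1})$; its center is the kernel of its reduction modulo $t$, a prime ideal. *)

From mathcomp Require Import all_boot all_algebra.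
Set Implicit Arguments. Unset Strict Implicit. Unset Printing Implicit Defensive.
Import GRing.Theory.
Local Open Scope ring_scope.

(* The truncated polynomial ring K[t]/(t^n) is modelled concretely by the
   polynomials of size <= n (i.e. degree < n), with multiplication followed by
   truncation [take_poly n]. *)
Definition trunc_alg_hom (k : fieldType) (A : comAlgType k) (K : fieldType)
    (iota : {rmorphism k -> K}) (n : nat) (f : A -> {poly K}) : Prop :=
  [/\ forall a, (size (f a) <= n)%N,
      forall a b, f (a + b) = f a + f b,
      forall (c : k) a, f (c *: a) = iota c *: f a,
      f 1 = take_poly n 1 &
      forall a b, f (a * b) = take_poly n (f a * f b)].

Definition jet (k : fieldType) (A : comAlgType k) (K : fieldType)
    (iota : {rmorphism k -> K}) (m : nat) (f : A -> {poly K}) : Prop :=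
  trunc_alg_hom iota m.+1 f.

Definition jet_center (A : Type) (K : fieldType) (f : A -> {poly K}) : pred A :=
  fun a => (f a)`_0 == 0.

Definition prime_ideal (A : comNzRingType) (p : pred A) : Prop :=
  [/\ 0 \in p,
      forall a b, a \in p -> b \in p -> a + b \in p,
      forall a b, b \in p -> a * b \in p,
      1 \notin p &
      forall a b, a * b \in p -> a \in p \/ b \in p].

From HB Require Import structures.
From mathcomp Require Import all_boot all_algebra.
From mathcomp Require Import boolp classical_sets.
From mathcomp Require Import zify.

(* Fix a K-linear retraction [pi] of E onto K (a maximal subspace of E
   meeting K only in 0 is a complement of K, by Zorn's lemma) and apply it to
   the coefficients of the E-valued lift.  This keeps the map additive and
   k-linear; it keeps it multiplicative because in degree i <= m+1 each term
   gamma(a)_j gamma(b)_(i-j) has a factor of degree <= m, which lies in K by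
   the lifting hypothesis, and [pi] is K-linear. *)

Set Implicit Arguments.
Unset Strict Implicit.
Unset Printing Implicit Defensive.

Import GRing.Theory.
Local Open Scope ring_scope.

Section DualFunctional.
Local Open Scope classical_set_scope.
Variables (K : fieldType) (V : lmodType K) (v : V).
Hypothesis v_neq0 : v != 0.

Definition subspace_avoiding_line (W : set V) : Prop :=
  [/\ forall x y, W x -> W y -> W (x + y),
      forall c x, W x -> W (c *: x) &
      forall d, W (d *: v) -> d = 0].

Lemma subspace_avoiding_line0 : subspace_avoiding_line [set 0].
Proof.
split=> [_ _ -> ->|c _ ->|d /eqP]; rewrite ?addr0 ?scaler0 //.
by rewrite scaler_eq0 (negPf v_neq0) orbF => /eqP.
Qed.

Lemma exists_max_subspace_avoiding_line :
  exists W, subspace_avoiding_line W /\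
    forall B, W `<` B -> ~ subspace_avoiding_line B.
Proof.
apply: Zorn_bigcup => F FW Ftot; split.
- move=> x y [X FX Xx] [Y FY Yy].
  have [XY|YX] := Ftot X Y FX FY.
    by exists Y => //; have [+ _ _] := FW Y FY; apply => //; exact: XY.
  by exists X => //; have [+ _ _] := FW X FX; apply => //; exact: YX.
- by move=> c x [X FX Xx]; exists X => //; have [_ + _] := FW X FX; apply.
- by move=> d [X FX Xd]; have [_ _] := FW X FX; apply.
Qed.

Section MaximalAvoidingSubspace.
Variable W : set V.
Hypotheses (avoidW : subspace_avoiding_line W)
  (maxW : forall B, W `<` B -> ~ subspace_avoiding_line B).

Lemma max_avoiding_line_mem0 : W 0.
Proof.
have [_ WZ _] := avoidW; apply: contrapT => W0.
suff /maxW : W `<` [set 0] by apply; exact: subspace_avoiding_line0.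
split=> [x Wx|]; last by move=> /(_ 0 erefl).
by apply: contrapT => _; apply: W0; rewrite -(scale0r x); apply: WZ.
Qed.

Lemma max_avoiding_line_decomp x : exists d, W (x - d *: v).
Proof.
have [WD WZ Wv] := avoidW; apply: contrapT => /forallNP noW.
pose Wx := [set y + c *: x | y in W & c in [set: K]].
have avoidWx : subspace_avoiding_line Wx.
  split.
  - move=> _ _ [y1 Wy1 [c1 _ <-]] [y2 Wy2 [c2 _ <-]].
    exists (y1 + y2); first exact: WD.
    by exists (c1 + c2); rewrite // scalerDl addrACA.
  - move=> c _ [y Wy [c1 _ <-]]; exists (c *: y); first exact: WZ.
    by exists (c * c1); rewrite // scalerDr scalerA.
  - move=> d [y Wy [c _ ydv]].
    have [c0|cn0] := eqVneq c 0.
      by apply: Wv; rewrite -ydv c0 scale0r addr0.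
    exfalso; apply: (noW (c^-1 * d)).
    have -> : x - (c^-1 * d) *: v = - c^-1 *: y.
      rewrite -scalerA -ydv scalerDr scalerA mulVf // scale1r.
      by rewrite scaleNr opprD addrC subrK.
    exact: WZ.
apply: (maxW _ avoidWx); split.
- by move=> y Wy; exists y => //; exists 0; rewrite ?scale0r ?addr0.
- move=> /(_ x) Wx_x; apply: (noW 0); rewrite scale0r subr0; apply: Wx_x.
  exists 0; first exact: max_avoiding_line_mem0.
  by exists 1; rewrite ?scale1r ?add0r.
Qed.

End MaximalAvoidingSubspace.

Lemma exists_dual_functional : exists phi : V -> K,
  [/\ {morph phi : x y / x + y},
      forall c x, phi (c *: x) = c * phi x & phi v = 1].
Proof.
have [W [avoidW maxW]] := exists_max_subspace_avoiding_line.
have [WD WZ Wv] := avoidW.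
have coord_uniq x d1 d2 : W (x - d1 *: v) -> W (x - d2 *: v) -> d1 = d2.
  move=> W1 W2; apply/eqP; rewrite -subr_eq0; apply/eqP/Wv.
  have -> : (d1 - d2) *: v = (x - d2 *: v) + (-1) *: (x - d1 *: v).
    by rewrite scaleN1r opprB [RHS]addrC addrA subrK scalerBl.
  by apply: WD => //; apply: WZ.
pose phi x := projT1 (cid (max_avoiding_line_decomp avoidW maxW x)).
have phiP x : W (x - phi x *: v) by rewrite /phi; case: cid.
exists phi; split.
- move=> x y; apply: (coord_uniq (x + y)); first exact: phiP.
  rewrite scalerDl opprD addrACA; exact: WD (phiP x) (phiP y).
- move=> c x; apply: (coord_uniq (c *: x)); first exact: phiP.
  rewrite -scalerA -scalerBr; exact: WZ (phiP x).
- apply: (coord_uniq v); first exact: phiP.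
  by rewrite scale1r subrr; apply: max_avoiding_line_mem0.
Qed.

End DualFunctional.

Definition restrict_scalars (K E : fieldType) (f : {rmorphism K -> E}) : Type :=
  E.

Section RestrictScalars.
Variables (K E : fieldType) (f : {rmorphism K -> E}).

HB.instance Definition _ := GRing.Zmodule.on (restrict_scalars f).

Let scale_via (c : K) (x : restrict_scalars f) : restrict_scalars f := f c * x.

Fact scale_viaA a b x : scale_via a (scale_via b x) = scale_via (a * b) x.
Proof. by rewrite /scale_via rmorphM mulrA. Qed.

Fact scale_via1 : left_id 1 scale_via.
Proof. by move=> x; rewrite /scale_via rmorph1 mul1r. Qed.

Fact scale_viaDr : right_distributive scale_via +%R.
Proof. by move=> c x y; rewrite /scale_via mulrDr. Qed.

Fact scale_viaDl x : {morph scale_via^~ x : a b / a + b}.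
Proof. by move=> a b; rewrite /scale_via rmorphD mulrDl. Qed.

HB.instance Definition _ := GRing.Zmodule_isLmodule.Build K (restrict_scalars f)
  scale_viaA scale_via1 scale_viaDr scale_viaDl.

Lemma exists_linear_retraction : exists pi : E -> K,
  [/\ {morph pi : x y / x + y},
      forall c x, pi (f c * x) = c * pi x & cancel f pi].
Proof.
have [|phi [phiD phiZ phi1]] :=
  @exists_dual_functional K (restrict_scalars f) 1; first exact: oner_neq0.
have fZ c (x : E) : f c * x = c *: (x : restrict_scalars f) by [].
by exists phi; split=> // c; rewrite -[f c]mulr1 fZ phiZ phi1 mulr1.
Qed.

End RestrictScalars.

Section RetractPoly.
Variables (K E : fieldType) (f : {rmorphism K -> E}) (pi : E -> K).
Hypotheses (piD : {morph pi : x y / x + y})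
  (piZ : forall c x, pi (f c * x) = c * pi x) (fK : cancel f pi).

Definition retract_poly n (u : {poly E}) : {poly K} := \poly_(i < n) pi u`_i.

Lemma coef_retract_poly n u i :
  (retract_poly n u)`_i = if (i < n)%N then pi u`_i else 0.
Proof. exact: coef_poly. Qed.

Lemma retract_polyD n : {morph retract_poly n : u v / u + v}.
Proof.
move=> u v; apply/polyP => i; rewrite coefD !coef_retract_poly.
by case: ifP; rewrite ?addr0 // coefD piD.
Qed.

Lemma retract_polyZ n c u : retract_poly n (f c *: u) = c *: retract_poly n u.
Proof.
apply/polyP => i; rewrite coefZ !coef_retract_poly.
by case: ifP; rewrite ?mulr0 // coefZ piZ.
Qed.

Lemma retract_poly_map n q : retract_poly n (map_poly f q) = take_poly n q.
Proof.
by apply/polyP => i; rewrite coef_retract_poly coef_take_poly coef_map /= fK.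
Qed.

Lemma coef_take_map_poly n u q i :
  take_poly n u = map_poly f q -> (i < n)%N -> u`_i = f q`_i.
Proof.
by move=> /(congr1 (coefp i)) /= + lt_in; rewrite coef_take_poly coef_map lt_in.
Qed.

Lemma take_retract_poly n u q :
  take_poly n u = map_poly f q -> take_poly n (retract_poly n.+1 u) = q.
Proof.
move=> uq; apply/polyP => i; rewrite coef_take_poly coef_retract_poly.
case: ifP => [lt_in|ge_in].
  by rewrite ltnW // (coef_take_map_poly uq) // fK.
apply/esym/nth_default; rewrite -(size_map_poly f) -uq.
by rewrite (leq_trans (size_take_poly _ _)) // leqNgt ge_in.
Qed.

Lemma retract_polyM n u v a b :
    take_poly n.+1 u = map_poly f a -> take_poly n.+1 v = map_poly f b ->
  retract_poly n.+2 (take_poly n.+2 (u * v))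
    = take_poly n.+2 (retract_poly n.+2 u * retract_poly n.+2 v).
Proof.
move=> ua vb; apply/polyP => i; rewrite coef_retract_poly !coef_take_poly.
case: ifP => // lt_in2; rewrite lt_in2 !coefM.
have pi0 : pi 0 = 0 by rewrite -(rmorph0 f) fK.
rewrite (big_morph pi piD pi0); apply: eq_bigr => -[j /= lt_ji] _.
rewrite !coef_retract_poly (leq_ltn_trans (ltnSE lt_ji) lt_in2).
rewrite (leq_ltn_trans (leq_subr j i)) //.
have [le_jn|lt_nj] := leqP j n.
  by rewrite (coef_take_map_poly ua) // piZ fK.
have le_ijn : (i - j < n.+1)%N by lia.
by rewrite (coef_take_map_poly vb) // mulrC piZ fK mulrC.
Qed.

End RetractPoly.

Lemma trunc_alg_hom_retract (k : fieldType) (A : comAlgType k)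
    (K E : fieldType) (iota : {rmorphism k -> K}) (f : {rmorphism K -> E})
    (n : nat) (gamma : A -> {poly E}) (alpha : A -> {poly K}) :
    trunc_alg_hom (f \o iota) n.+2 gamma ->
    (forall a, take_poly n.+1 (gamma a) = map_poly f (alpha a)) ->
  exists beta : A -> {poly K},
    trunc_alg_hom iota n.+2 beta /\ forall a, take_poly n.+1 (beta a) = alpha a.
Proof.
move=> [gS gD gZ g1 gM] gamma_lift.
have [pi [piD piZ fK]] := exists_linear_retraction f.
exists (fun a => retract_poly pi n.+2 (gamma a)); split; last first.
  by move=> a; exact (take_retract_poly fK (gamma_lift a)).
split=> [a|a b|c a||a b]; first exact: size_poly.
- by rewrite gD retract_polyD.
- by rewrite gZ retract_polyZ.
- rewrite g1 take_poly_id ?size_poly1 //.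
  by rewrite -(rmorph1 (map_poly f)) retract_poly_map.
- by rewrite gM (retract_polyM piD piZ fK (gamma_lift a) (gamma_lift b)).
Qed.

Theorem proposition3p8
  (k : fieldType) (hchar : [pchar k] =i pred0)
  (A : comAlgType k) (p : pred A) (hp : prime_ideal p)
  (K : fieldType) (iota : {rmorphism k -> K})
  (m : nat) (alpha : A -> {poly K})
  (halpha : jet iota m alpha)
  (hcenter : jet_center alpha =i p)
  (E : fieldType) (iotaE : {rmorphism K -> E})
  (gamma : A -> {poly E})
  (hgamma : trunc_alg_hom (iotaE \o iota) m.+2 gamma)
  (hlift : forall a, take_poly m.+1 (gamma a) = map_poly iotaE (alpha a)) :
  exists beta : A -> {poly K},
    trunc_alg_hom iota m.+2 beta /\
    forall a, take_poly m.+1 (beta a) = alpha a.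
Proof. exact: trunc_alg_hom_retract hgamma hlift. Qed.
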